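(* Let $(\mathcal G,k)$ be a quadratic Lie algebra, $f$ a linear endomorphism of $\mathcal G$ with $f([x,y])-[f(x),f(y)]\in\mathcal Z(\mathcal G)$ for all $x,y$, and $d$ an invertible linear endomorphism of $\mathcal G$ with $d[x,y]=[dx,fy]+[fx,dy]$ for all $x,y\in\mathcal G$. Then the left invariant semi-Riemannian metric on any connected Lie group with Lie algebra $\mathcal G$ defined by $\langle x,y\rangle=k(dx,dy)$ is flat, and its Levi-Civita product is $xy=d^{-1}[fx,dy]$.
   Context: A quadratic Lie algebra $(\mathcal G,k)$ is a real Lie algebra with a nondegenerate symmetric bilinear form $k$ such that each $\mathrm{ad}_x$ is $k$-skew-symmetric. $\mathcal Z(\mathcal G)$ is the center. The Levi-Civita product is the bilinear product on $\mathcal G$ given by $(xy)^+=\nabla_{x^+}y^+$ for the Levi-Civita connection $\nabla$ and left invariant vector fields $x^+$; it is characterized by the Koszul formula $2\langle xy,z\rangle=\langle[x,y],z\rangle-\langle[y,z],x\rangle+\langle[z,x],y\rangle$. *)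

From HB Require Import structures.
From mathcomp Require Import all_boot all_order all_algebra.
Set Implicit Arguments. Unset Strict Implicit. Unset Printing Implicit Defensive.
Import Order.TTheory GRing.Theory Num.Theory.
Local Open Scope ring_scope.

Section LieDefs.
Variables (R : realFieldType) (V : vectType R).

Definition bilinear_vmap (b : V -> V -> V) : Prop :=
  (forall (a : R) (x y z : V), b (a *: x + y) z = a *: b x z + b y z) /\
  (forall (a : R) (x y z : V), b x (a *: y + z) = a *: b x y + b x z).

Definition bilinear_form (k : V -> V -> R) : Prop :=
  (forall (a : R) (x y z : V), k (a *: x + y) z = a * k x z + k y z) /\
  (forall (a : R) (x y z : V), k x (a *: y + z) = a * k x y + k x z).

Definition is_lie_bracket (br : V -> V -> V) : Prop :=
  [/\ bilinear_vmap br,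
      (forall x, br x x = 0) &
      (forall x y z, br x (br y z) + br y (br z x) + br z (br x y) = 0)].

Definition is_quadratic_lie (br : V -> V -> V) (k : V -> V -> R) : Prop :=
  [/\ is_lie_bracket br,
      bilinear_form k,
      (forall x y, k x y = k y x),
      (forall x, (forall y, k x y = 0) -> x = 0) &
      (forall x y z, k (br x y) z = - k y (br x z))].

Definition in_center (br : V -> V -> V) (z : V) : Prop := forall y, br z y = 0.

(** [prod] is the Levi-Civita product of the left invariant metric [g]
    (Koszul formula). *)
Definition levi_civita_product (br : V -> V -> V) (g : V -> V -> R)
    (prod : V -> V -> V) : Prop :=
  forall x y z,
    2%:R * g (prod x y) z = g (br x y) z - g (br y z) x + g (br z x) y.

Definition flat_metric (br : V -> V -> V) (g : V -> V -> R) : Prop :=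
  forall prod, levi_civita_product br g prod ->
  forall x y z, prod x (prod y z) - prod y (prod x z) - prod (br x y) z = 0.

End LieDefs.

(* The Levi-Civita product of a nondegenerate metric is unique, so it suffices
   to check the Koszul formula for [xy := d^-1 [fx, dy]]: the derivation rule
   splits [k(d[x,y], dz)] into two terms, and invariance of [k] makes the six
   resulting terms cancel in pairs.  Conjugated by [d], left multiplication by
   [x] becomes [ad_(fx)], so flatness says that [ad_(f[x,y]) = [ad_(fx), ad_(fy)]];
   as [f[x,y]] and [[fx,fy]] differ by a central element, this is Jacobi. *)
From HB Require Import structures.
From mathcomp Require Import all_boot all_order all_algebra.
From mathcomp Require Import ring.
Import Order.TTheory GRing.Theory Num.Theory.
Local Open Scope ring_scope.
Set Implicit Arguments.
Unset Strict Implicit.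

Lemma double_eq0 (M : zmodType) (a : M) : a = a + a -> a = 0.
Proof. by move=> /(congr1 (fun t => t - a)); rewrite subrr addrK. Qed.

Section BilinearMap.
Variables (R : realFieldType) (V : vectType R) (b : V -> V -> V).
Hypothesis bilin_b : bilinear_vmap b.

Lemma bilinear_vmapDl x y z : b (x + y) z = b x z + b y z.
Proof. by case: bilin_b => Hl _; rewrite -[x]scale1r Hl !scale1r. Qed.

Lemma bilinear_vmapDr x y z : b x (y + z) = b x y + b x z.
Proof. by case: bilin_b => _ Hr; rewrite -[y]scale1r Hr !scale1r. Qed.

Lemma bilinear_vmap0r x : b x 0 = 0.
Proof. by apply: double_eq0; rewrite -bilinear_vmapDr addr0. Qed.

Lemma bilinear_vmapNr x y : b x (- y) = - b x y.
Proof.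
case: bilin_b => _ Hr.
by have := Hr (-1) x y 0; rewrite !scaleN1r !addr0 bilinear_vmap0r addr0.
Qed.

End BilinearMap.

Section BilinearForm.
Variables (R : realFieldType) (V : vectType R) (k : V -> V -> R).
Hypothesis bilin_k : bilinear_form k.

Lemma bilinear_formDl x y z : k (x + y) z = k x z + k y z.
Proof. by case: bilin_k => Hl _; rewrite -[x]scale1r Hl mul1r !scale1r. Qed.

Lemma bilinear_form0l x : k 0 x = 0.
Proof. by apply: double_eq0; rewrite -bilinear_formDl addr0. Qed.

Lemma bilinear_formNl x y : k (- x) y = - k x y.
Proof.
case: bilin_k => Hl _.
by have := Hl (-1) x 0 y; rewrite !scaleN1r !addr0 bilinear_form0l addr0 mulN1r.
Qed.

Lemma bilinear_formBl x y z : k (x - y) z = k x z - k y z.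
Proof. by rewrite bilinear_formDl bilinear_formNl. Qed.

End BilinearForm.

Section LieBracket.
Variables (R : realFieldType) (V : vectType R) (br : V -> V -> V).
Hypothesis lie_br : is_lie_bracket br.

Let bilin_br : bilinear_vmap br. Proof. by case: lie_br. Qed.

Lemma lie_bracketC x y : br x y = - br y x.
Proof.
case: lie_br => _ alt _; apply/eqP; rewrite -addr_eq0; apply/eqP.
have := alt (x + y).
by rewrite (bilinear_vmapDl bilin_br) !(bilinear_vmapDr bilin_br) !alt add0r addr0 addrC.
Qed.

Lemma lie_bracket_ad_commutator x y z :
  br x (br y z) - br y (br x z) = br (br x y) z.
Proof.
case: lie_br => _ _ jacobi; apply/eqP; rewrite -subr_eq0; apply/eqP.
have := jacobi x y z.
by rewrite (lie_bracketC z x) (bilinear_vmapNr bilin_br) (lie_bracketC z (br x y)).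
Qed.

Lemma lie_bracket_centralDl c x y : in_center br c -> br (c + x) y = br x y.
Proof. by move=> cZ; rewrite (bilinear_vmapDl bilin_br) cZ add0r. Qed.

End LieBracket.

Section QuadraticLie.
Variables (R : realFieldType) (V : vectType R) (br : V -> V -> V) (k : V -> V -> R).
Hypothesis quad : is_quadratic_lie br k.

Lemma quadratic_lie_cyclic a b c : k (br a b) c = k (br c a) b.
Proof.
case: quad => lie_br bilin_k ksym _ kinv.
by rewrite kinv ksym -(bilinear_formNl bilin_k) -(lie_bracketC lie_br).
Qed.

End QuadraticLie.

Section LeviCivita.
Variables (R : realFieldType) (V : vectType R) (br : V -> V -> V) (g : V -> V -> R).
Hypothesis bilin_g : bilinear_form g.
Hypothesis g_nondeg : forall x, (forall y, g x y = 0) -> x = 0.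

Lemma levi_civita_product_unique p1 p2 :
  levi_civita_product br g p1 -> levi_civita_product br g p2 ->
  forall x y, p1 x y = p2 x y.
Proof.
move=> LC1 LC2 x y; apply/eqP; rewrite -subr_eq0; apply/eqP; apply: g_nondeg => z.
have /eqP := LC1 x y z; rewrite -(LC2 x y z) -subr_eq0 -mulrBr mulf_eq0.
by rewrite pnatr_eq0 /= -(bilinear_formBl bilin_g) => /eqP.
Qed.

End LeviCivita.

Section PullbackMetric.
Variables (R : realFieldType) (V : vectType R) (k : V -> V -> R).
Variables (d : {linear V -> V}) (dinv : V -> V).
Hypotheses (dK : cancel d dinv) (Kd : cancel dinv d).

Lemma pullback_bilinear_form :
  bilinear_form k -> bilinear_form (fun x y => k (d x) (d y)).
Proof. by case=> Hl Hr; split=> a x y z; rewrite linearP /= ?Hl ?Hr. Qed.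

Lemma pullback_nondegenerate :
  (forall x, (forall y, k x y = 0) -> x = 0) ->
  forall x, (forall y, k (d x) (d y) = 0) -> x = 0.
Proof.
move=> k_nondeg x gx0.
have dx0 : d x = 0 by apply: k_nondeg => w; rewrite -(Kd w) gx0.
by apply: (can_inj dK); rewrite dx0 linear0.
Qed.

End PullbackMetric.

Section DerivationProduct.
Variables (R : realFieldType) (V : vectType R) (br : V -> V -> V) (k : V -> V -> R).
Variables (f d : {linear V -> V}) (dinv : V -> V).
Hypotheses (dK : cancel d dinv) (Kd : cancel dinv d).
Hypothesis d_der : forall x y, d (br x y) = br (d x) (f y) + br (f x) (d y).

Lemma derivation_product_levi_civita :
  is_quadratic_lie br k ->
  levi_civita_product br (fun x y => k (d x) (d y))
    (fun x y => dinv (br (f x) (d y))).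
Proof.
move=> quad x y z; have [_ bilin_k _ _ _] := quad.
rewrite Kd !d_der !(bilinear_formDl bilin_k).
rewrite (quadratic_lie_cyclic quad (f y) (d z)).
rewrite (quadratic_lie_cyclic quad (f x) (d y)).
rewrite (quadratic_lie_cyclic quad (f z) (d x)).
ring.
Qed.

Lemma derivation_product_flat :
  is_lie_bracket br ->
  (forall x y, in_center br (f (br x y) - br (f x) (f y))) ->
  forall x y z, dinv (br (f x) (d (dinv (br (f y) (d z)))))
    - dinv (br (f y) (d (dinv (br (f x) (d z)))))
    - dinv (br (f (br x y)) (d z)) = 0.
Proof.
move=> lie_br f_hom x y z.
apply: (can_inj dK); rewrite linear0 !linearB /= !Kd.
rewrite -(subrK (br (f x) (f y)) (f (br x y))).
rewrite (lie_bracket_centralDl lie_br _ _ (f_hom x y)).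
by rewrite (lie_bracket_ad_commutator lie_br) subrr.
Qed.

End DerivationProduct.

Theorem mainTheorem15 (R : realFieldType) (V : vectType R)
    (br : V -> V -> V) (k : V -> V -> R)
    (f d : {linear V -> V}) (dinv : V -> V) :
  is_quadratic_lie br k ->
  (forall x y, in_center br (f (br x y) - br (f x) (f y))) ->
  cancel d dinv -> cancel dinv d ->
  (forall x y, d (br x y) = br (d x) (f y) + br (f x) (d y)) ->
  let g := fun x y => k (d x) (d y) in
  flat_metric br g /\
  levi_civita_product br g (fun x y => dinv (br (f x) (d y))).
Proof.
move=> quad f_hom dK Kd d_der g.
have [lie_br bilin_k _ k_nondeg _] := quad.
have LC := derivation_product_levi_civita Kd d_der quad.
split=> // prod LCprod x y z.
rewrite !(levi_civita_product_unique (pullback_bilinear_form d bilin_k)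
  (pullback_nondegenerate dK Kd k_nondeg) LCprod LC).
exact: (derivation_product_flat dK Kd lie_br f_hom x y z).
Qed.
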